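(* Let $\phi$ be a sentence of $\mathbf{FO}(\mathrm{NE},\sqcup)$. Then $\phi$ is logically equivalent to some first-order sentence $\phi'$, i.e. for every structure $\mathfrak M$, $\mathfrak M\models_{\{\emptyset\}}\phi$ iff $\mathfrak M\models\phi'$ in Tarski semantics.
   Context: Team semantics (lax version). Let $\mathfrak M$ be a first-order structure with domain $M$. A team $X$ is a (possibly empty) set of assignments $s:V\to M$ for a finite set $V$ of variables. Satisfaction for formulas in negation normal form: for a first-order literal $\alpha$, $\mathfrak M\models_X\alpha$ iff every $s\in X$ satisfies $\alpha$ in Tarski semantics; $\mathfrak M\models_X\psi\vee\theta$ iff $X=Y\cup Z$ with $\mathfrak M\models_Y\psi$, $\mathfrak M\models_Z\theta$; $\mathfrak M\models_X\psi\wedge\theta$ iff both hold; $\mathfrak M\models_X\exists v\psi$ iff some $F:X\to\mathcal P(M)\setminus\{\emptyset\}$ has $\mathfrak M\models_{X[F/v]}\psi$ where $X[F/v]=\{s[m/v]:s\in X,m\in F(s)\}$; $\mathfrak M\models_X\forall v\psi$ iff $\mathfrak M\models_{X[M/v]}\psi$ where $X[M/v]=\{s[m/v]:s\in X,m\in M\}$. $\mathrm{NE}$ is the atom with $\mathfrak M\models_X\mathrm{NE}$ iff $X\ne\emptyset$; $\sqcup$ is classical disjunction: $\mathfrak M\models_X\phi\sqcup\psi$ iff $\mathfrak M\models_X\phi$ or $\mathfrak M\models_X\psi$. $\mathbf{FO}(\mathrm{NE},\sqcup)$ is first-order logic in negation normal form extended with these. A sentence $\phi$ is true in $\mathfrak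 M$ iff $\mathfrak M\models_{\{\emptyset\}}\phi$. *)

From Stdlib Require Import Arith.
From Stdlib Require Fin.

Set Implicit Arguments.

Record signature := {
  fsym : Type; farity : fsym -> nat;
  rsym : Type; rarity : rsym -> nat }.

Section Syntax.
Variable S : signature.

Inductive term : Type :=
  | Var : nat -> term
  | App : forall f : fsym S, (Fin.t (farity S f) -> term) -> term.

Inductive atom : Type :=
  | ARel : forall r : rsym S, (Fin.t (rarity S r) -> term) -> atom
  | AEq : term -> term -> atom.

Inductive tformula : Type :=
  | TPos : atom -> tformula
  | TNeg : atom -> tformula
  | TAnd : tformula -> tformula -> tformula
  | TOr  : tformula -> tformula -> tformula
  | TEx  : nat -> tformula -> tformula
  | TAll : nat -> tformula -> tformula
  | TNE  : tformula
  | TGor : tformula -> tformula -> tformula.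

Inductive foformula : Type :=
  | FAtom : atom -> foformula
  | FNot : foformula -> foformula
  | FAnd : foformula -> foformula -> foformula
  | FOr  : foformula -> foformula -> foformula
  | FEx  : nat -> foformula -> foformula
  | FAll : nat -> foformula -> foformula.

Fixpoint term_free (n : nat) (t : term) : Prop :=
  match t with
  | Var k => n = k
  | App f args => exists i, term_free n (args i)
  end.

Definition atom_free (n : nat) (a : atom) : Prop :=
  match a with
  | ARel r args => exists i, term_free n (args i)
  | AEq t1 t2 => term_free n t1 \/ term_free n t2
  end.

Fixpoint tfree (n : nat) (p : tformula) : Prop :=
  match p with
  | TPos a | TNeg a => atom_free n a
  | TAnd p q | TOr p q | TGor p q => tfree n p \/ tfree n q
  | TEx v p | TAll v p => n <> v /\ tfree n p
  | TNE => False
  end.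

Fixpoint fofree (n : nat) (p : foformula) : Prop :=
  match p with
  | FAtom a => atom_free n a
  | FNot p => fofree n p
  | FAnd p q | FOr p q => fofree n p \/ fofree n q
  | FEx v p | FAll v p => n <> v /\ fofree n p
  end.

Definition tsentence (p : tformula) : Prop := forall n, ~ tfree n p.
Definition fosentence (p : foformula) : Prop := forall n, ~ fofree n p.

End Syntax.

Record structure (S : signature) := {
  dom : Type;
  dom_inh : inhabited dom;
  finterp : forall f : fsym S, (Fin.t (farity S f) -> dom) -> dom;
  rinterp : forall r : rsym S, (Fin.t (rarity S r) -> dom) -> Prop }.

Section Semantics.
Variable S : signature.
Variable M : structure S.

Definition fupd (s : nat -> dom M) (v : nat) (m : dom M) : nat -> dom M :=
  fun x => if Nat.eqb x v then m else s x.

Fixpoint teval (s : nat -> dom M) (t : term S) : dom M :=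
  match t with
  | Var _ k => s k
  | App f args => finterp M f (fun i => teval s (args i))
  end.

Definition atom_holds (s : nat -> dom M) (a : atom S) : Prop :=
  match a with
  | ARel r args => rinterp M r (fun i => teval s (args i))
  | AEq t1 t2 => teval s t1 = teval s t2
  end.

Fixpoint fosat (s : nat -> dom M) (p : foformula S) : Prop :=
  match p with
  | FAtom a => atom_holds s a
  | FNot p => ~ fosat s p
  | FAnd p q => fosat s p /\ fosat s q
  | FOr p q => fosat s p \/ fosat s q
  | FEx v p => exists m, fosat (fupd s v m) p
  | FAll v p => forall m, fosat (fupd s v m) p
  end.

Definition fo_true (p : foformula S) : Prop := forall s, fosat s p.

(** ---- Team semantics (assignments with finite domain, modelled as partial
    functions; the empty assignment is [fun _ => None]) ---- *)
Definition passign := nat -> option (dom M).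
Definition team := passign -> Prop.

Definition pupd (s : passign) (v : nat) (m : dom M) : passign :=
  fun x => if Nat.eqb x v then Some m else s x.

Inductive pteval (s : passign) : term S -> dom M -> Prop :=
  | pte_var k m : s k = Some m -> pteval s (Var S k) m
  | pte_app f args (vs : Fin.t (farity S f) -> dom M) :
      (forall i, pteval s (args i) (vs i)) ->
      pteval s (App f args) (finterp M f vs).

Definition plit (s : passign) (a : atom S) (pos : bool) : Prop :=
  match a with
  | ARel r args => exists vs, (forall i, pteval s (args i) (vs i)) /\
      (if pos then rinterp M r vs else ~ rinterp M r vs)
  | AEq t1 t2 => exists m1 m2, pteval s t1 m1 /\ pteval s t2 m2 /\
      (if pos then m1 = m2 else m1 <> m2)
  end.

Fixpoint tsat (X : team) (p : tformula S) : Prop :=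
  match p with
  | TPos a => forall s, X s -> plit s a true
  | TNeg a => forall s, X s -> plit s a false
  | TAnd p q => tsat X p /\ tsat X q
  | TOr p q => exists Y Z : team,
      (forall s, X s <-> Y s \/ Z s) /\ tsat Y p /\ tsat Z q
  | TEx v p => exists F : passign -> dom M -> Prop,
      (forall s, X s -> exists m, F s m) /\
      tsat (fun s' => exists s m, X s /\ F s m /\ s' = pupd s v m) p
  | TAll v p => tsat (fun s' => exists s m, X s /\ s' = pupd s v m) p
  | TNE _ => exists s, X s
  | TGor p q => tsat X p \/ tsat X q
  end.

Definition team_true (p : tformula S) : Prop :=
  tsat (fun s => s = (fun _ => None)) p.

End Semantics.

(** Every formula of FO(NE, ⊔) is equivalent, on teams assigning its free
    variables, to a finite ⊔-disjunction of clauses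
    [α ∧ ⋀_j (⊤ ∨ (β_j ∧ NE))] with first-order [α] and [β_j]: a team
    satisfies such a clause iff all its members satisfy [α] and, for each [j],
    some member satisfies [β_j].  Clauses are closed under the connectives
    (for instance the tensor of two clauses is the clause with global part
    [α₁ ∨ α₂] and witnesses [α_i ∧ β]), so the normal form is computed by
    recursion on the formula.  On the team [{∅}] a clause is equivalent to
    the first-order sentence [α ∧ ⋀_j β_j]. *)

From Stdlib Require Import Arith List Setoid FunctionalExtensionality.
Import ListNotations.

Definition list_prod_with {A B C : Type} (f : A -> B -> C) l1 l2 : list C :=
  map (uncurry f) (list_prod l1 l2).

Lemma in_list_prod_with {A B C : Type} (f : A -> B -> C) l1 l2 c :
  In c (list_prod_with f l1 l2) <->
  exists a b, In a l1 /\ In b l2 /\ c = f a b.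
Proof.
  unfold list_prod_with; rewrite in_map_iff; split.
  - intros [[a b] [<- Hab]]; apply in_prod_iff in Hab; firstorder.
  - intros (a & b & Ha & Hb & ->); exists (a, b); split; [|apply in_prod]; auto.
Qed.

Lemma exists_in_list_prod_with {A B C : Type} (f : A -> B -> C) l1 l2
    (P : C -> Prop) :
  (exists c, In c (list_prod_with f l1 l2) /\ P c) <->
  exists a b, In a l1 /\ In b l2 /\ P (f a b).
Proof.
  setoid_rewrite in_list_prod_with; split.
  - intros (c & (a & b & Ha & Hb & ->) & Hc); eauto.
  - intros (a & b & Ha & Hb & Hab); eauto 7.
Qed.

Lemma exists_in_map {A B : Type} (f : A -> B) l (P : B -> Prop) :
  (exists b, In b (map f l) /\ P b) <-> exists a, In a l /\ P (f a).
Proof.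
  setoid_rewrite in_map_iff; split.
  - intros (b & (a & <- & Ha) & Hb); eauto.
  - intros (a & Ha & Hfa); eauto.
Qed.

Lemma exists_in_singleton {A : Type} (x : A) (P : A -> Prop) :
  (exists a, In a [x] /\ P a) <-> P x.
Proof. split; [intros (a & [<-|[]] & H); exact H | eauto using in_eq]. Qed.

Section Translation.
Context {S : signature}.

Record clause := Clause {
  cl_every : foformula S;
  cl_some : list (foformula S) }.

Definition fo_top : foformula S := FAll 0 (FAtom (AEq (Var S 0) (Var S 0))).
Definition fo_bot : foformula S := FNot fo_top.

Lemma fosat_fo_top (M : structure S) r : fosat M r fo_top.
Proof. intro m; reflexivity. Qed.

Lemma fofree_fo_top n : ~ fofree n fo_top.
Proof. intros [? [?|?]]; congruence. Qed.

Definition fo_lit (a : atom S) (pos : bool) : foformula S :=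
  if pos then FAtom a else FNot (FAtom a).

Definition cl_witness (v : nat) (c : clause) : list (foformula S) :=
  map (fun b => FEx v (FAnd (cl_every c) b)) (cl_some c).

Definition cl_and (c1 c2 : clause) : clause :=
  Clause (FAnd (cl_every c1) (cl_every c2)) (cl_some c1 ++ cl_some c2).

Definition cl_tensor (c1 c2 : clause) : clause :=
  Clause (FOr (cl_every c1) (cl_every c2))
    (map (FAnd (cl_every c1)) (cl_some c1) ++ map (FAnd (cl_every c2)) (cl_some c2)).

Definition cl_exists (v : nat) (c : clause) : clause :=
  Clause (FEx v (cl_every c)) (cl_witness v c).

Definition cl_forall (v : nat) (c : clause) : clause :=
  Clause (FAll v (cl_every c)) (cl_witness v c).

Definition cl_ne : clause := Clause fo_top [fo_top].

Fixpoint clauses_of (p : tformula S) : list clause :=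
  match p with
  | TPos a => [Clause (fo_lit a true) []]
  | TNeg a => [Clause (fo_lit a false) []]
  | TAnd p q => list_prod_with cl_and (clauses_of p) (clauses_of q)
  | TOr p q => list_prod_with cl_tensor (clauses_of p) (clauses_of q)
  | TEx v p => map (cl_exists v) (clauses_of p)
  | TAll v p => map (cl_forall v) (clauses_of p)
  | TNE _ => [cl_ne]
  | TGor p q => clauses_of p ++ clauses_of q
  end.

Definition clause_free (n : nat) (c : clause) : Prop :=
  fofree n (cl_every c) \/ exists b, In b (cl_some c) /\ fofree n b.

Lemma clause_free_and n c1 c2 :
  clause_free n (cl_and c1 c2) -> clause_free n c1 \/ clause_free n c2.
Proof.
  unfold clause_free; simpl; setoid_rewrite in_app_iff; firstorder.
Qed.

Lemma clause_free_tensor n c1 c2 :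
  clause_free n (cl_tensor c1 c2) -> clause_free n c1 \/ clause_free n c2.
Proof.
  unfold clause_free; simpl; setoid_rewrite in_app_iff; setoid_rewrite in_map_iff.
  intros [[H|H] | (b & [(b' & <- & Hb) | (b' & <- & Hb)] & [H|H])]; eauto 6.
Qed.

Lemma clause_free_witness n v c b :
  In b (cl_witness v c) -> fofree n b -> n <> v /\ clause_free n c.
Proof.
  unfold clause_free, cl_witness; rewrite in_map_iff.
  intros (b' & <- & Hb) [Hv [H|H]]; eauto.
Qed.

Lemma clause_free_exists n v c :
  clause_free n (cl_exists v c) -> n <> v /\ clause_free n c.
Proof.
  intros [H | (b & Hb & H)]; [destruct H as [Hv H]; split; [|left]; auto|].
  exact (clause_free_witness n v c b Hb H).
Qed.

Lemma clause_free_forall n v c :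
  clause_free n (cl_forall v c) -> n <> v /\ clause_free n c.
Proof.
  intros [H | (b & Hb & H)]; [destruct H as [Hv H]; split; [|left]; auto|].
  exact (clause_free_witness n v c b Hb H).
Qed.

Lemma clauses_of_free p c n :
  In c (clauses_of p) -> clause_free n c -> tfree n p.
Proof.
  revert c; induction p as [a|a|p IHp q IHq|p IHp q IHq|v p IHp|v p IHp|
                            |p IHp q IHq]; simpl; intros c Hc Hn.
  1, 2: destruct Hc as [<-|[]]; destruct Hn as [Hn | (b & [] & _)]; exact Hn.
  - apply in_list_prod_with in Hc as (c1 & c2 & H1 & H2 & ->).
    apply clause_free_and in Hn as [Hn|Hn]; eauto.
  - apply in_list_prod_with in Hc as (c1 & c2 & H1 & H2 & ->).
    apply clause_free_tensor in Hn as [Hn|Hn]; eauto.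
  - apply in_map_iff in Hc as (c' & <- & Hc).
    apply clause_free_exists in Hn as [Hv Hn]; eauto.
  - apply in_map_iff in Hc as (c' & <- & Hc).
    apply clause_free_forall in Hn as [Hv Hn]; eauto.
  - destruct Hc as [<-|[]].
    destruct Hn as [Hn | (b & [<-|[]] & Hn)]; destruct (fofree_fo_top n Hn).
  - apply in_app_iff in Hc as [Hc|Hc]; eauto.
Qed.

Section TeamSemantics.
Variable M : structure S.

(* The values taken from [t] never matter once [s] assigns all free
   variables of the formula at hand (see [team_defined]). *)
Definition extend (t : nat -> dom M) (s : passign M) : nat -> dom M :=
  fun x => match s x with Some m => m | None => t x end.

Lemma extend_pupd t s v m : extend t (pupd s v m) = fupd M (extend t s) v m.
Proof.
  apply functional_extensionality; intro x; unfold extend, pupd, fupd.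
  destruct (x =? v); reflexivity.
Qed.

Lemma pteval_inv s u m : pteval s u m ->
  match u with
  | Var _ k => s k = Some m
  | App f args => exists vs, (forall i, pteval s (args i) (vs i)) /\ m = finterp M f vs
  end.
Proof. intros H; destruct H; eauto. Qed.

Fixpoint pteval_iff t s (u : term S) {struct u} :
  (forall n, term_free n u -> s n <> None) ->
  forall m, pteval s u m <-> teval M (extend t s) u = m.
Proof.
  destruct u as [k|f args]; intros Hd m; split.
  - intros H; apply pteval_inv in H; simpl; unfold extend; rewrite H; reflexivity.
  - simpl; unfold extend; intros H; specialize (Hd k eq_refl).
    destruct (s k) eqn:E; [subst; constructor; exact E | congruence].
  - intros H; apply pteval_inv in H as (vs & Hv & ->); simpl.
    f_equal; apply functional_extensionality; intro i.
    apply (pteval_iff t s (args i)); auto.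
    intros n Hn; apply Hd; simpl; eauto.
  - simpl; intros <-; constructor; intro i.
    apply (pteval_iff t s (args i)); auto.
    intros n Hn; apply Hd; simpl; eauto.
Qed.

Lemma plit_iff t s a pos : (forall n, atom_free n a -> s n <> None) ->
  plit s a pos <-> fosat M (extend t s) (fo_lit a pos).
Proof.
  intros Hd; unfold plit, fo_lit; destruct a as [r args|u1 u2]; simpl in Hd.
  - assert (Hargs : forall vs, (forall i, pteval s (args i) (vs i)) <->
                    vs = (fun i => teval M (extend t s) (args i))).
    { intros vs; split.
      - intros Hv; apply functional_extensionality; intro i; symmetry.
        apply (pteval_iff t s); [intros n Hn; apply Hd; eauto | apply Hv].
      - intros -> i; apply (pteval_iff t s); [intros n Hn; apply Hd; eauto | reflexivity]. }
    setoid_rewrite Hargs.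
    destruct pos; simpl;
      (split; [intros (vs & -> & H); exact H | intros H; eexists; split; [reflexivity | exact H]]).
  - assert (H1 : forall n, term_free n u1 -> s n <> None) by (intros n Hn; apply Hd; auto).
    assert (H2 : forall n, term_free n u2 -> s n <> None) by (intros n Hn; apply Hd; auto).
    setoid_rewrite (pteval_iff t s u1 H1); setoid_rewrite (pteval_iff t s u2 H2).
    destruct pos; simpl;
      (split; [intros (m1 & m2 & <- & <- & H); exact H | intros H; do 2 eexists; eauto]).
Qed.

Definition clause_sat (X : team M) t (c : clause) : Prop :=
  (forall s, X s -> fosat M (extend t s) (cl_every c)) /\
  (forall b, In b (cl_some c) -> exists s, X s /\ fosat M (extend t s) b).

Definition supplement (X : team M) v (F : passign M -> dom M -> Prop) : team M :=
  fun s' => exists s m, X s /\ F s m /\ s' = pupd s v m.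

Definition duplicate (X : team M) v : team M :=
  fun s' => exists s m, X s /\ s' = pupd s v m.

Lemma clause_sat_lit X t a pos :
  (forall s, X s -> forall n, atom_free n a -> s n <> None) ->
  clause_sat X t (Clause (fo_lit a pos) []) <-> forall s, X s -> plit s a pos.
Proof.
  intros Hd; unfold clause_sat; cbn [cl_every cl_some In].
  split; [intros [H _] s Hs | intros H; split; [intros s Hs | intros _ []]];
    [apply (plit_iff t) | apply (plit_iff t)]; auto.
Qed.

Lemma clause_sat_and X t c1 c2 :
  clause_sat X t (cl_and c1 c2) <-> clause_sat X t c1 /\ clause_sat X t c2.
Proof.
  unfold clause_sat; simpl; setoid_rewrite in_app_iff; firstorder.
Qed.

Lemma clause_sat_tensor X t c1 c2 :
  clause_sat X t (cl_tensor c1 c2) <->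
  exists Y Z : team M, (forall s, X s <-> Y s \/ Z s) /\
    clause_sat Y t c1 /\ clause_sat Z t c2.
Proof.
  unfold clause_sat; simpl; setoid_rewrite in_app_iff; setoid_rewrite in_map_iff.
  split.
  - intros [Hall Hsome].
    exists (fun s => X s /\ fosat M (extend t s) (cl_every c1)),
           (fun s => X s /\ fosat M (extend t s) (cl_every c2)).
    split; [intro s; split; [intros Hs; destruct (Hall s Hs); auto | tauto]|].
    split; split; try tauto; intros b Hb.
    + destruct (Hsome (FAnd (cl_every c1) b)) as (s & Hs & H1 & H2); eauto.
    + destruct (Hsome (FAnd (cl_every c2) b)) as (s & Hs & H1 & H2); eauto.
  - intros (Y & Z & HX & [Y1 Y2] & [Z1 Z2]); split.
    + intros s Hs; apply HX in Hs as [Hs|Hs]; auto.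
    + intros b [(b' & <- & Hb) | (b' & <- & Hb)];
        [destruct (Y2 b' Hb) as (s & Hs & H) | destruct (Z2 b' Hb) as (s & Hs & H)];
        exists s; simpl; firstorder.
Qed.

Lemma clause_sat_exists X t v c :
  clause_sat X t (cl_exists v c) <->
  exists F, (forall s, X s -> exists m, F s m) /\ clause_sat (supplement X v F) t c.
Proof.
  unfold clause_sat, cl_witness, supplement; simpl; setoid_rewrite in_map_iff.
  split.
  - intros [Hall Hsome].
    exists (fun s m => fosat M (fupd M (extend t s) v m) (cl_every c)).
    split; [exact Hall|]; split.
    + intros s' (s & m & _ & Hm & ->); rewrite extend_pupd; exact Hm.
    + intros b Hb; destruct (Hsome (FEx v (FAnd (cl_every c) b))) as
        (s & Hs & m & Hm & H); eauto.
      exists (pupd s v m); rewrite extend_pupd; eauto 6.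
  - intros (F & HF & Hall & Hsome); split.
    + intros s Hs; destruct (HF s Hs) as [m Hm]; exists m.
      rewrite <- extend_pupd; eauto 7.
    + intros b' (b & <- & Hb).
      destruct (Hsome b Hb) as (s' & (s & m & Hs & Hm & ->) & H).
      exists s; split; [exact Hs|]; exists m; rewrite <- extend_pupd; split; eauto 7.
Qed.

Lemma clause_sat_forall X t v c :
  clause_sat X t (cl_forall v c) <-> clause_sat (duplicate X v) t c.
Proof.
  unfold clause_sat, cl_witness, duplicate; simpl; setoid_rewrite in_map_iff.
  split.
  - intros [Hall Hsome]; split.
    + intros s' (s & m & Hs & ->); rewrite extend_pupd; auto.
    + intros b Hb; destruct (Hsome (FEx v (FAnd (cl_every c) b))) as
        (s & Hs & m & Hm & H); eauto.
      exists (pupd s v m); rewrite extend_pupd; eauto.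
  - intros [Hall Hsome]; split.
    + intros s Hs m; rewrite <- extend_pupd; eauto.
    + intros b' (b & <- & Hb).
      destruct (Hsome b Hb) as (s' & (s & m & Hs & ->) & H).
      exists s; split; [exact Hs|]; exists m; rewrite <- extend_pupd; split; eauto.
Qed.

Lemma clause_sat_ne X t : clause_sat X t cl_ne <-> exists s, X s.
Proof.
  unfold clause_sat, cl_ne; cbn [cl_every cl_some]; split.
  - intros [_ H]; destruct (H fo_top (or_introl eq_refl)) as (s & Hs & _); eauto.
  - intros [s Hs]; split; [intros s' _; apply fosat_fo_top|].
    intros b [<-|[]]; exists s; split; [exact Hs | apply fosat_fo_top].
Qed.

Definition team_defined (X : team M) (p : tformula S) : Prop :=
  forall s, X s -> forall n, tfree n p -> s n <> None.

Lemma team_defined_sub (X Y : team M) p q :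
  (forall s, Y s -> X s) -> (forall n, tfree n q -> tfree n p) ->
  team_defined X p -> team_defined Y q.
Proof. intros HYX Hpq HX s Hs n Hn; apply (HX s); auto. Qed.

Lemma team_defined_pupd (X Y : team M) v p :
  (forall s', Y s' -> exists s m, X s /\ s' = pupd s v m) ->
  (forall s, X s -> forall n, n <> v -> tfree n p -> s n <> None) ->
  team_defined Y p.
Proof.
  intros HY HX s' Hs' n Hn; destruct (HY s' Hs') as (s & m & Hs & ->); unfold pupd.
  destruct (n =? v) eqn:E; [congruence|].
  apply (HX s Hs); auto; apply Nat.eqb_neq, E.
Qed.

Theorem tsat_iff_clauses p : forall X t, team_defined X p ->
  tsat X p <-> exists c, In c (clauses_of p) /\ clause_sat X t c.
Proof.
  induction p as [a|a|p IHp q IHq|p IHp q IHq|v p IHp|v p IHp|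
                  |p IHp q IHq]; intros X t Hd; cbn [tsat clauses_of].
  1, 2: rewrite exists_in_singleton, clause_sat_lit; [reflexivity | exact Hd].
  - rewrite (IHp X t), (IHq X t), exists_in_list_prod_with
      by (apply (team_defined_sub X _ (TAnd p q)); simpl; auto).
    setoid_rewrite clause_sat_and; firstorder.
  - rewrite exists_in_list_prod_with; setoid_rewrite clause_sat_tensor; split.
    + intros (Y & Z & HX & HY & HZ).
      apply (IHp Y t) in HY as (c1 & H1 & Hc1);
        [|apply (team_defined_sub X _ (TOr p q)); simpl; firstorder].
      apply (IHq Z t) in HZ as (c2 & H2 & Hc2);
        [|apply (team_defined_sub X _ (TOr p q)); simpl; firstorder].
      exists c1, c2; eauto 7.
    + intros (c1 & c2 & H1 & H2 & Y & Z & HX & Hc1 & Hc2); exists Y, Z.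
      split; [exact HX|]; split.
      * apply (IHp Y t); [apply (team_defined_sub X _ (TOr p q)); simpl; firstorder|eauto].
      * apply (IHq Z t); [apply (team_defined_sub X _ (TOr p q)); simpl; firstorder|eauto].
  - assert (HdF : forall F, team_defined (supplement X v F) p).
    { intro F; apply (team_defined_pupd X _ v); [intros s' (s & m & Hs & _ & ->); eauto|].
      intros s Hs n Hv Hn; apply (Hd s Hs); simpl; auto. }
    rewrite exists_in_map; setoid_rewrite clause_sat_exists; split.
    + intros (F & HF & H); apply (IHp _ t (HdF F)) in H as (c & Hc & H); eauto.
    + intros (c & Hc & F & HF & H); exists F; split; [exact HF|].
      apply (IHp _ t (HdF F)); eauto.
  - rewrite (IHp (duplicate X v) t), exists_in_map.
    + setoid_rewrite clause_sat_forall; reflexivity.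
    + apply (team_defined_pupd X _ v); [intros s' (s & m & Hs & ->); eauto|].
      intros s Hs n Hv Hn; apply (Hd s Hs); simpl; auto.
  - rewrite exists_in_singleton, clause_sat_ne; reflexivity.
  - rewrite (IHp X t), (IHq X t)
      by (apply (team_defined_sub X _ (TGor p q)); simpl; auto).
    setoid_rewrite in_app_iff; firstorder.
Qed.

End TeamSemantics.

Definition fo_conj (l : list (foformula S)) : foformula S := fold_right (@FAnd S) fo_top l.
Definition fo_disj (l : list (foformula S)) : foformula S := fold_right (@FOr S) fo_bot l.

Definition fo_of_clause (c : clause) : foformula S :=
  FAnd (cl_every c) (fo_conj (cl_some c)).

Definition fo_translation (p : tformula S) : foformula S :=
  fo_disj (map fo_of_clause (clauses_of p)).

Lemma fosat_fo_conj M r l :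
  fosat M r (fo_conj l) <-> forall b, In b l -> fosat M r b.
Proof.
  induction l as [|a l IHl]; simpl.
  - split; [intros _ _ []| intros _; exact (fosat_fo_top M r)].
  - rewrite IHl; firstorder congruence.
Qed.

Lemma fosat_fo_disj M r l :
  fosat M r (fo_disj l) <-> exists b, In b l /\ fosat M r b.
Proof.
  induction l as [|a l IHl]; simpl.
  - split; [intros H; destruct (H (fosat_fo_top M r)) | intros (b & [] & _)].
  - rewrite IHl; firstorder congruence.
Qed.

Lemma fofree_fo_conj n l : fofree n (fo_conj l) -> exists b, In b l /\ fofree n b.
Proof.
  induction l as [|a l IHl]; simpl.
  - intros H; destruct (fofree_fo_top n H).
  - intros [H|H]; [eauto | destruct (IHl H) as (b & ? & ?); eauto].
Qed.

Lemma fofree_fo_disj n l : fofree n (fo_disj l) -> exists b, In b l /\ fofree n b.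
Proof.
  induction l as [|a l IHl]; simpl.
  - intros H; destruct (fofree_fo_top n H).
  - intros [H|H]; [eauto | destruct (IHl H) as (b & ? & ?); eauto].
Qed.

Lemma fosentence_fo_translation p : tsentence p -> fosentence (fo_translation p).
Proof.
  intros Hp n Hn; apply fofree_fo_disj in Hn as (b & Hb & Hn).
  apply in_map_iff in Hb as (c & <- & Hc).
  apply (Hp n), (clauses_of_free p c n Hc).
  destruct Hn as [Hn|Hn]; [left; exact Hn | right; apply fofree_fo_conj, Hn].
Qed.

(* On the team [{∅}], [extend t] is just [t]. *)
Lemma clause_sat_empty_assignment M t c :
  clause_sat M (fun s => s = (fun _ => None)) t c <-> fosat M t (fo_of_clause c).
Proof.
  unfold clause_sat, fo_of_clause; simpl; rewrite fosat_fo_conj; split.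
  - intros [Hall Hsome]; split; [exact (Hall _ eq_refl)|].
    intros b Hb; destruct (Hsome b Hb) as (s & -> & H); exact H.
  - intros [Hall Hsome]; split; [intros s ->; exact Hall|].
    intros b Hb; exists (fun _ => None); auto.
Qed.

Lemma team_true_iff_fosat M p t :
  tsentence p -> team_true M p <-> fosat M t (fo_translation p).
Proof.
  intros Hp; unfold team_true, fo_translation.
  rewrite (tsat_iff_clauses M p _ t) by (intros s _ n Hn; destruct (Hp n Hn)).
  rewrite fosat_fo_disj, exists_in_map.
  setoid_rewrite clause_sat_empty_assignment; reflexivity.
Qed.

End Translation.

Theorem mainTheorem2 (S : signature) (phi : tformula S) :
  tsentence phi ->
  exists phi' : foformula S,
    fosentence phi' /\
    forall M : structure S, team_true M phi <-> fo_true M phi'.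
Proof.
  intros Hphi; exists (fo_translation phi); split.
  - exact (fosentence_fo_translation phi Hphi).
  - intros M; destruct (dom_inh M) as [d]; split.
    + intros H t; apply (team_true_iff_fosat M phi t Hphi), H.
    + intros H; apply (team_true_iff_fosat M phi (fun _ => d) Hphi), H.
Qed.
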